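(* Fix integers $p\ge 1$, $N_p\ge 1$, a time index $j\in\mathbb{N}$, a gain $K\in\mathbb{R}^{pn_u\times n_x}$, vectors $z_{l|j}\in\mathbb{R}^{n_x}$ and scalars $\alpha_{l|j}\ge 0$ for $l\in\{0,\dots,N_p\}$, vectors $V_{l|j}\in\mathbb{R}^{pn_u}$ for $l\in\{0,\dots,N_p-1\}$, and the current state $X_j\in\mathbb{R}^{n_x}$. Define the tube sets $\mathcal{X}_{l|j}=\{z_{l|j}\}\oplus\alpha_{l|j}\mathcal{X}_0=\{x: H_x(x-z_{l|j})\le \alpha_{l|j}\mathbf{1}\}$ and the policies $U_{l|j}(X)=KX+V_{l|j}$. Then the following tube conditions hold: (i) $X_j\in\mathcal{X}_{0|j}$; (ii) for all $l\in\{0,\dots,N_p-1\}$, all $X\in\mathcal{X}_{l|j}$, all $\theta\in\Theta$ and all $w_x\in\mathbb{W}_x$: $\bar A(\theta)X+\bar B(\theta)U_{l|j}(X)+w_x\in\mathcal{X}_{l+1|j}$; (iii) for all $l\in\{0,\dots,N_p-1\}$ and all $X\in\mathcal{X}_{l|j}$: $X\in\mathbb{X}$ and $U_{l|j}(X)\in\mathbb{U}^p$; (iv) for all $l\in\{0,\dots,N_p-1\}$, all $X\in\mathcal{X}_{l|j}$, all $\theta\in\Theta$ and all $w_y\in\mathbb{W}_y$: $\bar C(\theta)X+\bar D(\theta)U_{l|j}(X)+w_y\in\mathbb{X}^{p-1}$; if and only if there exist matrices $\Lambda^v_{l|j}\in\mathbb{R}_{\ge 0}^{(q_x+c_x(p-1))\times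 q_\theta}$ (entrywise nonnegative) such that for all $v\in\{1,\dots,n_v\}$ and all $l\in\{0,\dots,N_p-1\}$: $F z_{l|j}+\alpha_{l|j}\bar f\le\mathbf{1}$, $G_pK z_{l|j}+G_pV_{l|j}+\alpha_{l|j}\bar g\le \mathbf{1}$, $H_x(X_j-z_{0|j})\le \alpha_{0|j}\mathbf{1}$, $\Lambda^v_{l|j}h_\theta+H_p e^v_{l|j}\le \Phi_{l+1|j}-\bar w$, $H_pE^v_{l|j}=\Lambda^v_{l|j}H_\theta$.
   Context: Setting: $n_x,n_u,n_p\in\mathbb{N}$, $p\in\mathbb{N}$, $p\ge1$. Constraint sets $\mathbb{X}=\{x\in\mathbb{R}^{n_x}: Fx\le\mathbf{1}\}$ and $\mathbb{U}=\{u\in\mathbb{R}^{n_u}: Gu\le \mathbf{1}\}$ are compact polytopes with $F\in\mathbb{R}^{c_x\times n_x}$, $G\in\mathbb{R}^{c_u\times n_u}$; $\mathbb{U}^p$ and $\mathbb{X}^{p-1}$ denote Cartesian products, and $\mathbf{1}$ is a vector of ones of appropriate size. Matrices $\bar A(\theta)\in\mathbb{R}^{n_x\times n_x}$, $\bar B(\theta)\in\mathbb{R}^{n_x\times pn_u}$, $\bar C(\theta)\in\mathbb{R}^{(p-1)n_x\times n_x}$, $\bar D(\theta)\in\mathbb{R}^{(p-1)n_x\times pn_u}$ depend affinely on $\theta\in\mathbb{R}^{n_p}$: $(\bar A,\bar B,\bar C,\bar D)(\theta)=(\bar A_0,\bar B_0,\bar C_0,\bar D_0)+\sum_{i=1}^{n_p}(\bar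 A_i,\bar B_i,\bar C_i,\bar D_i)[\theta]_i$. The parameter set $\Theta=\{\theta\in\mathbb{R}^{n_p}: H_\theta\theta\le h_\theta\}$ is a nonempty bounded polytope, $H_\theta\in\mathbb{R}^{q_\theta\times n_p}$, $h_\theta\in\mathbb{R}^{q_\theta}$. $\mathbb{W}_x\subseteq\mathbb{R}^{n_x}$ and $\mathbb{W}_y\subseteq\mathbb{R}^{(p-1)n_x}$ are bounded polytopes. $\mathcal{X}_0=\{x\in\mathbb{R}^{n_x}:H_xx\le\mathbf{1}\}$, $H_x\in\mathbb{R}^{q_x\times n_x}$, is a bounded polytope with vertices $x^1,\dots,x^{n_v}$. Notation: $F_p=\mathrm{blkdiag}(F,\dots,F)$ ($p-1$ blocks), $G_p=\mathrm{blkdiag}(G,\dots,G)$ ($p$ blocks), $H_p=\mathrm{blkdiag}(H_x,F_p)$; $[\bar f]_i=\max_{x\in\mathcal{X}_0}[F]_ix$, $[\bar g]_i=\max_{x\in\mathcal{X}_0}[G_pK]_ix$, $[\bar w_x]_i=\max_{w\in\mathbb{W}_x}[H_x]_iw$, $[\bar w_y]_i=\max_{w\in\mathbb{W}_y}[F_p]_iw$ (where $[M]_i$ is the $i$-th row), $\bar w=[\bar w_x^\top,\bar w_y^\top]^\top$, $\Phi_{l+1|j}=[\alpha_{l+1|j}\mathbf{1}^\top,\mathbf{1}^\top]^\top\in\mathbb{R}^{q_x+c_x(p-1)}$. For each vertex: $X^v_{l|j}=z_{l|j}+\alpha_{l|j}x^v$, $U^v_{l|j}=V_{l|j}+KX^v_{l|j}$,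 $E^v_{l|j}$ is the matrix whose $i$-th column ($i=1,\dots,n_p$) is $\begin{bmatrix}\bar A_iX^v_{l|j}+\bar B_iU^v_{l|j}\\ \bar C_iX^v_{l|j}+\bar D_iU^v_{l|j}\end{bmatrix}$, and $e^v_{l|j}=\begin{bmatrix}\bar A_0X^v_{l|j}+\bar B_0U^v_{l|j}-z_{l+1|j}\\ \bar C_0X^v_{l|j}+\bar D_0U^v_{l|j}\end{bmatrix}$. *)

From mathcomp Require Import all_boot all_order all_algebra.
From mathcomp Require Import reals.
Set Implicit Arguments. Unset Strict Implicit. Unset Printing Implicit Defensive.
Import Order.TTheory GRing.Theory Num.Theory.
Local Open Scope ring_scope.

Section Defs.
Context {R : realType}.

Definition mle (m n : nat) (a b : 'M[R]_(m, n)) : Prop := forall i j, a i j <= b i j.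

Definition ones (m : nat) : 'cV[R]_m := const_mx 1.

Definition polyH (q n : nat) (H : 'M[R]_(q, n)) (h : 'cV[R]_q) : 'cV[R]_n -> Prop :=
  fun x => mle (H *m x) h.

Definition bounded_set (n : nat) (S : 'cV[R]_n -> Prop) : Prop :=
  exists M : R, forall x, S x -> forall i, `|x i 0| <= M.

Definition extreme_point (n : nat) (S : 'cV[R]_n -> Prop) (x : 'cV[R]_n) : Prop :=
  S x /\ forall (y z : 'cV[R]_n) (t : R), S y -> S z -> 0 < t -> t < 1 ->
    x = t *: y + (1 - t) *: z -> y = z.

Definition is_max_on (n : nat) (S : 'cV[R]_n -> Prop) (f : 'cV[R]_n -> R) (m : R) : Prop :=
  (exists x, S x /\ f x = m) /\ (forall x, S x -> f x <= m).

Definition rowf (q n : nat) (M : 'M[R]_(q, n)) (i : 'I_q) (x : 'cV[R]_n) : R :=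
  (row i M *m x) 0 0.

(* decomposition of an index of 'I_(k * m) into (block, offset), block-major *)
Definition blk_split (k m : nat) (i : 'I_(k * m)) : 'I_k * 'I_m :=
  enum_val (cast_ord (esym (mxvec_cast k m)) i).

(* blkdiag(A, ..., A), k copies *)
Definition blkrep (k m n : nat) (A : 'M[R]_(m, n)) : 'M[R]_(k * m, k * n) :=
  \matrix_(i, j) (if (blk_split i).1 == (blk_split j).1
                  then A (blk_split i).2 (blk_split j).2 else 0).

Definition affmx (np m n : nat) (M0 : 'M[R]_(m, n)) (Ms : 'I_np -> 'M[R]_(m, n))
  (th : 'cV[R]_np) : 'M[R]_(m, n) :=
  M0 + \sum_(i < np) th i 0 *: Ms i.

End Defs.

(* tube index helpers: for l : 'I_Np, cur l = l and nxt l = l+1 in 'I_Np.+1 *)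
Definition cur (Np : nat) (l : 'I_Np) : 'I_Np.+1 := widen_ord (leqnSn Np) l.
Definition nxt (Np : nat) (l : 'I_Np) : 'I_Np.+1 := lift ord0 l.

From mathcomp Require Import all_boot all_order all_algebra.
From mathcomp Require Import reals.
From mathcomp Require Import ring lra.
From Stdlib Require Import Classical.
Set Implicit Arguments. Unset Strict Implicit. Unset Printing Implicit Defensive.
Import Order.TTheory GRing.Theory Num.Theory.
Local Open Scope ring_scope.

(* By the affine Farkas lemma, an
   affine inequality e + E th <= b holds on the nonempty polytope Theta iff
   some L >= 0 has E = L H_theta and L h_theta + e <= b.  With the
   disturbances replaced by their worst cases w_bar, (ii) and (iv) at a state
   X say exactly that the successor H_p (e + E th) obeys such an inequality;
   at the tube vertices this is the certificate Lambda.  The successor is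
   affine in X, and a linear functional bounded at the vertices of a bounded
   polyhedron is bounded on it (a non-vertex lies between two points with
   strictly fewer slack constraints), so the vertex conditions propagate to
   the whole tube z + alpha X_0.  Finally (iii) holds on the tube iff it holds
   at the row-wise maximisers, which f_bar and g_bar encode. *)

Section Farkas.
Variables (R : realFieldType) (V : lmodType R).

Lemma farkas_project (m : nat) (a : nat -> V -> R) (c : V -> R) (x0 : V) :
  (forall i, scalar (a i)) -> scalar c -> 0 < a m x0 ->
  (forall x, (forall i, (i < m.+1)%N -> a i x <= 0) -> c x <= 0) ->
  forall x, (forall i, (i < m)%N -> a i x - a i x0 / a m x0 * a m x <= 0) ->
    c x - c x0 / a m x0 * a m x <= 0.
Proof.
move=> ha hc am0 H x hx; set t := a m x0.
pose y := (- (a m x / t)) *: x0 + x.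
have ayE i : a i y = a i x - a i x0 / t * a m x by rewrite /y ha; ring.
have -> : c x - c x0 / t * a m x = c y by rewrite /y hc; ring.
apply: H => i; rewrite ltnS leq_eqVlt => /orP[/eqP ->|/hx]; last by rewrite ayE.
by rewrite ayE -/t divff ?gt_eqF // mul1r subrr.
Qed.

(* If the first m constraints already imply c <= 0 the induction hypothesis
   applies; otherwise a point x0 violating only the last one is used to
   project that constraint away. *)
Lemma farkas (m : nat) (a : nat -> V -> R) (c : V -> R) :
  (forall i, scalar (a i)) -> scalar c ->
  (forall x, (forall i, (i < m)%N -> a i x <= 0) -> c x <= 0) ->
  exists2 lam : nat -> R, (forall i, 0 <= lam i) &
    forall x, c x = \sum_(i < m) lam i * a i x.
Proof.
elim: m a c => [|m IH] a c ha hc H.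
  exists (fun=> 0) => [//|x]; rewrite big_ord0; apply/eqP; rewrite eq_le H //.
  by rewrite -oppr_le0 -mulN1r -(scalable_linear hc) H.
have [Hm|] := classic (forall x, (forall i, (i < m)%N -> a i x <= 0) -> c x <= 0).
  have [lam lam0 hlam] := IH a c ha hc Hm.
  exists (fun i => if (i < m)%N then lam i else 0) => [i|x]; first by case: ifP.
  rewrite big_ord_recr /= ltnn mul0r addr0 hlam.
  by apply: eq_bigr => i _; rewrite ltn_ord.
move=> /not_all_ex_not[x0 hx0]; have [ax0 cx0] := imply_to_and _ _ hx0.
have {}cx0 : 0 < c x0 by rewrite ltNge; apply/negP.
have am0 : 0 < a m x0.
  rewrite ltNge; apply/negP => am0; move: cx0; rewrite ltNge H // => i.
  by rewrite ltnS leq_eqVlt => /orP[/eqP -> //|]; apply: ax0.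
have ha' i : scalar (fun x => a i x - a i x0 / a m x0 * a m x).
  by move=> k x y; rewrite !ha; ring.
have hc' : scalar (fun x => c x - c x0 / a m x0 * a m x).
  by move=> k x y; rewrite hc ha; ring.
have [mu mu0 hmu] := IH _ _ ha' hc' (farkas_project ha hc am0 H).
set t := a m x0 in hmu *; set S := \sum_(i < m) mu i * a i x0.
have S_le0 : S <= 0 by apply: sumr_le0 => i _; rewrite mulr_ge0_le0 ?ax0.
exists (fun i => if (i < m)%N then mu i else (c x0 - S) / t) => [i|x].
  by case: ifP => // _; rewrite divr_ge0 ?ltW //; lra.
rewrite big_ord_recr /= ltnn; under eq_bigr do rewrite ltn_ord.
have -> : c x = c x - c x0 / t * a m x + c x0 / t * a m x by ring.
rewrite hmu (_ : \sum_(i < m) _ = \sum_(i < m) mu i * a i x - S / t * a m x).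
  by ring.
by rewrite /S !mulr_suml -sumrB; apply: eq_bigr => i _; ring.
Qed.

End Farkas.

Section MatrixEntries.
Variable R : comPzRingType.

Lemma addmxE m n (A B : 'M[R]_(m, n)) i j : (A + B) i j = A i j + B i j.
Proof. by rewrite mxE. Qed.

Lemma submxE m n (A B : 'M[R]_(m, n)) i j : (A - B) i j = A i j - B i j.
Proof. by rewrite !mxE. Qed.

Lemma oppmxE m n (A : 'M[R]_(m, n)) i j : (- A) i j = - A i j.
Proof. by rewrite mxE. Qed.

Lemma scalemxE m n (a : R) (A : 'M[R]_(m, n)) i j : (a *: A) i j = a * A i j.
Proof. by rewrite mxE. Qed.

Lemma mulmx_ray_entry m n (M : 'M[R]_(m, n)) (y d : 'cV[R]_n) (s : R) i :
  (M *m (y + s *: d)) i 0 = (M *m y) i 0 + s * (M *m d) i 0.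
Proof. by rewrite mulmxDr -scalemxAr addmxE scalemxE. Qed.

End MatrixEntries.

Section AffineFarkas.
Variables (R : realType) (n q : nat) (H : 'M[R]_(q, n)) (h : 'cV[R]_q).
Variables (c : 'rV[R]_n) (b : R).
Hypothesis feasible : exists th, polyH H h th.
Hypothesis le_b : forall th, polyH H h th -> (c *m th) 0 0 <= b.

Lemma homogenized_le (x : 'cV[R]_n) (t : R) :
  0 <= t -> mle (H *m x) (t *: h) -> (c *m x) 0 0 <= t * b.
Proof.
move=> t_ge0 Hx; have [t_gt0|t_le0] := ltP 0 t.
  rewrite mulrC -ler_pdivrMr // mulrC -scalemxE scalemxAr; apply: le_b => i j.
  by rewrite -scalemxAr scalemxE mulrC ler_pdivrMr // mulrC -scalemxE.
(* For t = 0, x is a recession direction of the feasible set, so c x > 0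
   would make c unbounded on it. *)
have {t_ge0 t_le0} t0 : t = 0 by apply/le_anti/andP.
rewrite t0 mul0r leNgt; apply/negP => cx_gt0.
have [th0 Hth0] := feasible.
pose s := (b - (c *m th0) 0 0 + 1) / (c *m x) 0 0.
have s_ge0 : 0 <= s by rewrite divr_ge0 ?ltW //; have := le_b Hth0; lra.
have P_ray : polyH H h (th0 + s *: x).
  move=> i j; rewrite (ord1 j) mulmx_ray_entry.
  have := Hx i 0; rewrite t0 scale0r [X in _ <= X]mxE => Hxi.
  by have := Hth0 i 0; have := mulr_ge0_le0 s_ge0 Hxi; lra.
by have := le_b P_ray; rewrite mulmx_ray_entry mulfVK ?gt_eqF //; lra.
Qed.

Lemma farkas_affine :
  exists lam : 'rV[R]_q,
    [/\ forall k, 0 <= lam 0 k, lam *m H = c & (lam *m h) 0 0 <= b].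
Proof.
(* The homogenised system on pairs (x, t): rows H x - t h, then - t. *)
pose a i (x : 'cV[R]_n * R^o) :=
  if insub i is Some k then (H *m x.1) k 0 - h k 0 * x.2 else - x.2.
have aE (k : 'I_q) x : a k x = (H *m x.1) k 0 - h k 0 * x.2 by rewrite /a valK.
have aq x : a q x = - x.2 by rewrite /a insubN // ltnn.
have [lam lam_ge0 lamE] : exists2 lam : nat -> R, (forall i, 0 <= lam i) &
    forall x, (c *m x.1) 0 0 - b * x.2 = \sum_(i < q.+1) lam i * a i x.
  apply: (farkas (a := a) (c := fun x => (c *m x.1) 0 0 - b * x.2))
    => [i k x y|k x y|[x t] Ha] /=.
  - rewrite /a; case: insub => [j|] /=; last by rewrite -[k *: _]/(k * _); ring.
    by rewrite mulmxDr -scalemxAr addmxE scalemxE -[k *: _]/(k * _); ring.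
  - by rewrite mulmxDr -scalemxAr addmxE scalemxE -[k *: _]/(k * _); ring.
  - rewrite subr_le0 mulrC homogenized_le //.
      by have := Ha q (ltnSn q); rewrite aq /=; lra.
    move=> i j; rewrite (ord1 j) scalemxE mulrC.
    by have := Ha i (leqW (ltn_ord i)); rewrite aE /=; lra.
have sumE (x : 'cV[R]_n * R^o) : (c *m x.1) 0 0 - b * x.2 =
    \sum_(k < q) lam k * ((H *m x.1) k 0 - h k 0 * x.2) - lam q * x.2.
  rewrite lamE big_ord_recr aq mulrN; congr (_ - _).
  by apply: eq_bigr => k _; rewrite aE.
exists (\row_k lam k); split; first by move=> k; rewrite mxE.
  apply/rowP => j; have := sumE (delta_mx j 0, 0); rewrite /= -!colE.
  rewrite !mulr0 !subr0 mxE => ->; rewrite mxE; apply: eq_bigr => k _.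
  by rewrite !mxE mulr0 subr0.
have := sumE (0, 1); rewrite /= mulmx0 mxE.
under eq_bigr do rewrite mulmx0 mxE sub0r mulr1 mulrN.
rewrite sumrN mxE => sum_h; under eq_bigr do rewrite mxE.
by have := lam_ge0 q; lra.
Qed.

End AffineFarkas.

Section EntrywiseOrder.
Variable R : realType.

Lemma polyH_ones0 q n (H : 'M[R]_(q, n)) : polyH H (ones q) 0.
Proof. by move=> i j; rewrite mulmx0 !mxE ler01. Qed.

Lemma mle_col_mx m1 m2 n (a c : 'M[R]_(m1, n)) (b d : 'M[R]_(m2, n)) :
  mle (col_mx a b) (col_mx c d) <-> mle a c /\ mle b d.
Proof.
split=> [le_ab|[le_ac le_bd] i j].
  split=> i j; [have := le_ab (lshift m2 i) j | have := le_ab (rshift m1 i) j];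
  by rewrite ?col_mxEu ?col_mxEd.
by rewrite -(splitK i); case: (split i) => k /=; rewrite ?col_mxEu ?col_mxEd.
Qed.

Lemma mle_addr_subr m n (a w b : 'M[R]_(m, n)) : mle (a + w) b <-> mle a (b - w).
Proof. by split=> le_ab i j; have := le_ab i j; rewrite !addmxE ?oppmxE; lra. Qed.

Lemma mle_mulmx m q n (L : 'M[R]_(m, q)) (a b : 'M[R]_(q, n)) :
  (forall i k, 0 <= L i k) -> mle a b -> mle (L *m a) (L *m b).
Proof.
by move=> L_ge0 le_ab i j; rewrite !mxE; apply: ler_sum => k _; apply: ler_wpM2l.
Qed.

Lemma rowfE q n (M : 'M[R]_(q, n)) i x : rowf M i x = (M *m x) i 0.
Proof. by rewrite /rowf -row_mul mxE. Qed.

Lemma mle_max_rows_iff n k (S : 'cV[R]_n -> Prop) (M : 'M[R]_(k, n))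
    (mbar c b : 'cV[R]_k) (a : R) :
  0 <= a -> (forall i, is_max_on S (rowf M i) (mbar i 0)) ->
  (forall y, S y -> mle (c + a *: (M *m y)) b) <-> mle (c + a *: mbar) b.
Proof.
move=> a_ge0 mbar_max.
split=> [le_b i j|le_b y Sy i j]; rewrite (ord1 j) !addmxE !scalemxE.
  have [[y [Sy <-]] _] := mbar_max i.
  by have := le_b y Sy i 0; rewrite addmxE scalemxE rowfE.
have := (mbar_max i).2 y Sy; rewrite rowfE => le_yi.
have := le_b i 0; rewrite !addmxE !scalemxE; have := ler_wpM2l a_ge0 le_yi; lra.
Qed.

Lemma polyH_mle_iff_dual n q m (H : 'M[R]_(q, n)) (h : 'cV[R]_q)
    (E : 'M[R]_(m, n)) (e b : 'cV[R]_m) :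
  (exists th, polyH H h th) ->
  (forall th, polyH H h th -> mle (e + E *m th) b) <->
  exists L : 'M[R]_(m, q),
    [/\ forall i k, 0 <= L i k, E = L *m H & mle (L *m h + e) b].
Proof.
move=> feasible; split=> [le_b|[L [L_ge0 -> le_Lh]] th Hth i j].
  have row_cert r : exists lam : 'rV[R]_q, [/\ forall k, 0 <= lam 0 k,
      lam *m H = row r E & (lam *m h) 0 0 <= b r 0 - e r 0].
    apply: farkas_affine => // th Hth; rewrite -row_mul mxE.
    by have := le_b th Hth r 0; rewrite addmxE; lra.
  have [lam lamP] := fin_all_exists row_cert.
  have rowL r : row r (\matrix_(i, k) lam i 0 k) = lam r.
    by apply/rowP => k; rewrite !mxE.
  exists (\matrix_(i, k) lam i 0 k); split.
  - by move=> i k; rewrite mxE; have [] := lamP i.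
  - by apply/row_matrixP => r; rewrite row_mul rowL; have [] := lamP r.
  move=> i j; rewrite (ord1 j) addmxE.
  have -> : (\matrix_(i, k) lam i 0 k *m h) i 0 = (lam i *m h) 0 0.
    by rewrite -rowL -row_mul [RHS]mxE.
  by have [_ _] := lamP i; lra.
rewrite (ord1 j) addmxE -mulmxA; have := le_Lh i 0; rewrite addmxE.
by have := mle_mulmx L_ge0 Hth i 0; lra.
Qed.

End EntrywiseOrder.

Section BoundedPolyhedron.
Variables (R : realType) (n q : nat) (H : 'M[R]_(q, n)) (h : 'cV[R]_q).
Local Notation P := (polyH H h).
Hypothesis P_bounded : bounded_set P.

Definition slack (y : 'cV[R]_n) : {set 'I_q} := [set i | (H *m y) i 0 < h i 0].

Lemma bounded_polyH_dir (y d : 'cV[R]_n) :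
  P y -> d != 0 -> exists i, 0 < (H *m d) i 0.
Proof.
move=> Py d_neq0; apply: NNPP => no_i.
have Hd_le0 i : (H *m d) i 0 <= 0.
  by rewrite leNgt; apply/negP => Hdi; apply: no_i; exists i.
have [j dj_neq0] : exists j, d j 0 != 0.
  apply: NNPP => d0; move/eqP: d_neq0; apply; apply/colP => j; rewrite mxE.
  by apply/eqP; apply: contra_notT d0 => dj; exists j.
have [M M_bound] := P_bounded.
pose s := (M + `|y j 0| + 1) / `|d j 0|.
have s_ge0 : 0 <= s.
  by rewrite divr_ge0 //; have := M_bound y Py j; have := normr_ge0 (y j 0); lra.
have P_ray : P (y + s *: d).
  move=> i k; rewrite (ord1 k) mulmx_ray_entry.
  by have := Py i 0; have := mulr_ge0_le0 s_ge0 (Hd_le0 i); lra.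
have := M_bound _ P_ray j; rewrite addmxE scalemxE.
have : `|s * d j 0| = M + `|y j 0| + 1.
  by rewrite normrM ger0_norm // mulfVK ?normr_eq0.
by have := lerB_normD (s * d j 0) (y j 0); rewrite [s * _ + _]addrC; lra.
Qed.

Lemma polyH_ray_slack (y d : 'cV[R]_n) :
  P y -> d != 0 -> (forall i, (H *m y) i 0 = h i 0 -> (H *m d) i 0 = 0) ->
  exists2 s, 0 < s & P (y + s *: d) /\ (#|slack (y + s *: d)| < #|slack y|)%N.
Proof.
move=> Py d_neq0 tight_d; have [i0 Hdi0] := bounded_polyH_dir Py d_neq0.
pose step i := (h i 0 - (H *m y) i 0) / (H *m d) i 0.
have [i1 Hdi1 step_min] :=
  @arg_minP _ R _ i0 (fun i => 0 < (H *m d) i 0) step Hdi0.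
have slack_i1 : (H *m y) i1 0 < h i1 0.
  rewrite lt_neqAle (Py i1 0) andbT; apply/eqP => /tight_d Hd0.
  by move: Hdi1; rewrite Hd0 ltxx.
have step_gt0 : 0 < step i1 by rewrite divr_gt0 // subr_gt0.
have step_le i :
    0 < (H *m d) i 0 -> step i1 * (H *m d) i 0 <= h i 0 - (H *m y) i 0.
  by move=> Hdi; rewrite -ler_pdivlMr //; apply: step_min.
exists (step i1) => //; split.
  move=> i j; rewrite (ord1 j) mulmx_ray_entry.
  have [/step_le|Hdi] := ltP 0 ((H *m d) i 0); first lra.
  by have := Py i 0; have := mulr_ge0_le0 (ltW step_gt0) Hdi; lra.
apply: proper_card; apply/properP; split.
  apply/subsetP => i; rewrite !inE mulmx_ray_entry => lt_i.
  rewrite lt_neqAle (Py i 0) andbT; apply/eqP => /[dup] tight /tight_d Hd0.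
  by move: lt_i; rewrite Hd0 mulr0 addr0 tight ltxx.
exists i1; first by rewrite inE.
by rewrite inE mulmx_ray_entry /step mulfVK ?gt_eqF // addrC subrK ltxx.
Qed.

Lemma not_extreme_dir (y : 'cV[R]_n) : P y -> ~ extreme_point P y ->
  exists2 d : 'cV[R]_n,
    d != 0 & forall i, (H *m y) i 0 = h i 0 -> (H *m d) i 0 = 0.
Proof.
move=> Py not_ext; apply: NNPP => no_d; apply: not_ext; split=> // y1 y2 t.
move=> Py1 Py2 t_gt0 t_lt1 yE; apply/eqP; apply: contra_notT no_d => y12.
exists (y1 - y2); first by rewrite subr_eq0.
move=> i; rewrite yE mulmxDr -!scalemxAr addmxE !scalemxE mulmxBr submxE.
move=> tight; have le1 := Py1 i 0; have le2 := Py2 i 0.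
have u1 : 0 <= t * (h i 0 - (H *m y1) i 0).
  by rewrite mulr_ge0 ?subr_ge0 ?(ltW t_gt0).
have u2 : 0 <= (1 - t) * (h i 0 - (H *m y2) i 0).
  by rewrite mulr_ge0 ?subr_ge0 ?(ltW t_lt1).
have : t * (h i 0 - (H *m y1) i 0) == 0 by apply/eqP; lra.
rewrite mulf_eq0 gt_eqF //= subr_eq0 => /eqP e1.
have : (1 - t) * (h i 0 - (H *m y2) i 0) == 0 by apply/eqP; lra.
by rewrite mulf_eq0 subr_eq0 eq_sym lt_eqF //= subr_eq0 => /eqP e2; lra.
Qed.

Lemma polyH_le_vertices nv (xv : 'I_nv -> 'cV[R]_n) (c : 'rV[R]_n) (b : R) :
  (forall x, extreme_point P x -> exists v, xv v = x) ->
  (forall v, (c *m xv v) 0 0 <= b) -> forall y, P y -> (c *m y) 0 0 <= b.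
Proof.
move=> ext_xv le_b.
suff: forall k y, (#|slack y| < k)%N -> P y -> (c *m y) 0 0 <= b.
  by move=> le_k y; apply: le_k.
elim=> [//|k IH] y slack_lt Py.
have [ext|not_ext] := classic (extreme_point P y).
  by have [v <-] := ext_xv y ext.
have [d d_neq0 tight_d] := not_extreme_dir Py not_ext.
have [s1 s1_gt0 [Py1 lt1]] := polyH_ray_slack Py d_neq0 tight_d.
have [s2 s2_gt0 [Py2 lt2]] : exists2 s, 0 < s &
    P (y + s *: - d) /\ (#|slack (y + s *: - d)| < #|slack y|)%N.
  apply: polyH_ray_slack => //; first by rewrite oppr_eq0.
  by move=> i /tight_d; rewrite mulmxN oppmxE => ->; rewrite oppr0.
have := IH _ (leq_trans lt1 slack_lt) Py1.
have := IH _ (leq_trans lt2 slack_lt) Py2.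
by rewrite !mulmx_ray_entry mulmxN oppmxE; nra.
Qed.

Lemma polyH_vertex_exists nv (xv : 'I_nv -> 'cV[R]_n) (y : 'cV[R]_n) :
  (forall x, extreme_point P x -> exists v, xv v = x) -> P y -> (0 < nv)%N.
Proof.
(* With no vertices the bound 0 <= -1 would hold vacuously. *)
case: nv xv => // xv ext_xv Py.
suff : ((0 : 'rV[R]_n) *m y) 0 0 <= -1 by rewrite mul0mx mxE; lra.
by apply: (polyH_le_vertices ext_xv) Py => -[].
Qed.

Lemma polyH_scaled_decomp (y0 z x : 'cV[R]_n) (a : R) :
  P y0 -> 0 <= a -> mle (H *m (x - z)) (a *: h) ->
  exists2 y, P y & x = z + a *: y.
Proof.
move=> Py0 a_ge0 Hx; have [a_gt0|a_le0] := ltP 0 a.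
  exists (a^-1 *: (x - z)).
    move=> i j; rewrite -scalemxAr scalemxE mulrC ler_pdivrMr // mulrC.
    by rewrite -scalemxE.
  by rewrite scalerA mulfV ?gt_eqF // scale1r addrC subrK.
have a0 : a = 0 by apply/le_anti/andP.
exists y0 => //; rewrite a0 scale0r addr0; apply/eqP; rewrite -subr_eq0.
apply/negP => /negP xz_neq0; have [i Hi] := bounded_polyH_dir Py0 xz_neq0.
by have := Hx i 0; rewrite a0 scale0r [X in _ <= X]mxE leNgt Hi.
Qed.

Lemma polyH_scaled_mem (z y : 'cV[R]_n) (a : R) :
  0 <= a -> P y -> mle (H *m (z + a *: y - z)) (a *: h).
Proof.
by move=> a_ge0 Py i j; rewrite addrC addKr -scalemxAr !scalemxE ler_wpM2l.
Qed.

End BoundedPolyhedron.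

Section AffineParameter.
Variable R : realType.

Lemma affmx_mulmxE np m n (M0 : 'M[R]_(m, n)) (Ms : 'I_np -> 'M[R]_(m, n))
    (th : 'cV[R]_np) (x : 'cV[R]_n) :
  affmx M0 Ms th *m x = M0 *m x + \sum_i th i 0 *: (Ms i *m x).
Proof.
rewrite /affmx mulmxDl mulmx_suml; congr (_ + _).
by apply: eq_bigr => i _; rewrite scalemxAl.
Qed.

Lemma cols_mulmx m np (f : 'I_np -> 'cV[R]_m) (th : 'cV[R]_np) :
  \matrix_(r, i) f i r 0 *m th = \sum_i th i 0 *: f i.
Proof.
by apply/colP => r; rewrite mxE summxE; apply: eq_bigr => i _; rewrite !mxE mulrC.
Qed.

Lemma sum_col_mx m1 m2 n np (f : 'I_np -> 'M[R]_(m1, n))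
    (g : 'I_np -> 'M[R]_(m2, n)) :
  \sum_i col_mx (f i) (g i) = col_mx (\sum_i f i) (\sum_i g i).
Proof.
elim/big_rec3: _ => [|i s sf sg _ ->]; first by rewrite col_mx0.
by rewrite add_col_mx.
Qed.

Lemma affmx_col_mx_split np nx ny nu (A0 : 'M[R]_(nx, nx)) As
    (B0 : 'M[R]_(nx, nu)) Bs (C0 : 'M[R]_(ny, nx)) Cs (D0 : 'M[R]_(ny, nu)) Ds
    (th : 'cV[R]_np) x u z :
  col_mx (A0 *m x + B0 *m u - z) (C0 *m x + D0 *m u)
  + \matrix_(r, i) (col_mx (As i *m x + Bs i *m u)
                           (Cs i *m x + Ds i *m u)) r 0 *m th
  = col_mx (affmx A0 As th *m x + affmx B0 Bs th *m u - z)
           (affmx C0 Cs th *m x + affmx D0 Ds th *m u).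
Proof.
rewrite cols_mulmx; under eq_bigr do rewrite scale_col_mx !scalerDr.
rewrite sum_col_mx add_col_mx !affmx_mulmxE !big_split /=.
rewrite [in LHS]addrAC [in X in col_mx X _ = _]addrACA.
by rewrite [X in col_mx _ X = _]addrACA.
Qed.

End AffineParameter.

Section TubeCertificate.
Variables (R : realType) (nx nu np p cx cu qth qx qwx qwy nv Np : nat).
Variables (F : 'M[R]_(cx, nx)) (G : 'M[R]_(cu, nu)).
Variables (A0 : 'M[R]_(nx, nx)) (As : 'I_np -> 'M[R]_(nx, nx)).
Variables (B0 : 'M[R]_(nx, p * nu)) (Bs : 'I_np -> 'M[R]_(nx, p * nu)).
Variables (C0 : 'M[R]_(p.-1 * nx, nx)) (Cs : 'I_np -> 'M[R]_(p.-1 * nx, nx)).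
Variables (D0 : 'M[R]_(p.-1 * nx, p * nu)).
Variables (Ds : 'I_np -> 'M[R]_(p.-1 * nx, p * nu)).
Variables (Hth : 'M[R]_(qth, np)) (hth : 'cV[R]_qth).
Variables (Hwx : 'M[R]_(qwx, nx)) (hwx : 'cV[R]_qwx).
Variables (Hwy : 'M[R]_(qwy, p.-1 * nx)) (hwy : 'cV[R]_qwy).
Variables (Hx : 'M[R]_(qx, nx)) (xv : 'I_nv -> 'cV[R]_nx).
Variable K : 'M[R]_(p * nu, nx).
Variables (z : 'I_Np.+1 -> 'cV[R]_nx) (alpha : 'I_Np.+1 -> R).
Variables (V : 'I_Np -> 'cV[R]_(p * nu)) (Xj : 'cV[R]_nx).
Variables (fbar : 'cV[R]_cx) (gbar : 'cV[R]_(p * cu)).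
Variables (wbx : 'cV[R]_qx) (wby : 'cV[R]_(p.-1 * cx)).

Local Notation X0 := (polyH Hx (ones qx)).
Local Notation Gp := (blkrep p G).
Local Notation Fp := (blkrep p.-1 F).
Local Notation Hp := (block_mx Hx 0 0 Fp).

Hypothesis Theta_nonempty : exists th, polyH Hth hth th.
Hypothesis X0_bounded : bounded_set X0.
Hypothesis xv_extreme : forall v, extreme_point X0 (xv v).
Hypothesis extreme_xv : forall x, extreme_point X0 x -> exists v, xv v = x.
Hypothesis alpha_ge0 : forall l, 0 <= alpha l.
Hypothesis fbar_max : forall i, is_max_on X0 (rowf F i) (fbar i 0).
Hypothesis gbar_max : forall i, is_max_on X0 (rowf (Gp *m K) i) (gbar i 0).
Hypothesis wbx_max : forall i, is_max_on (polyH Hwx hwx) (rowf Hx i) (wbx i 0).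
Hypothesis wby_max : forall i, is_max_on (polyH Hwy hwy) (rowf Fp i) (wby i 0).
Hypothesis Np_gt0 : (0 < Np)%N.

Definition tube (l : 'I_Np.+1) (x : 'cV[R]_nx) :=
  mle (Hx *m (x - z l)) (alpha l *: ones qx).

Definition policy (l : 'I_Np) (x : 'cV[R]_nx) := K *m x + V l.

Definition succ (l : 'I_Np) (th : 'cV[R]_np) (x : 'cV[R]_nx) :=
  col_mx (affmx A0 As th *m x + affmx B0 Bs th *m policy l x - z (nxt l))
         (affmx C0 Cs th *m x + affmx D0 Ds th *m policy l x).

Definition succ_bound (l : 'I_Np) :=
  col_mx (alpha (nxt l) *: ones qx) (ones (p.-1 * cx)) - col_mx wbx wby.

Definition vert (v : 'I_nv) (l : 'I_Np) := z (cur l) + alpha (cur l) *: xv v.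

(* succ_nominal v l and succ_param v l are the paper's e^v_{l|j} and
   E^v_{l|j}. *)
Definition succ_nominal (v : 'I_nv) (l : 'I_Np) :=
  col_mx (A0 *m vert v l + B0 *m (V l + K *m vert v l) - z (nxt l))
         (C0 *m vert v l + D0 *m (V l + K *m vert v l)).

Definition succ_param (v : 'I_nv) (l : 'I_Np) : 'M[R]_(nx + p.-1 * nx, np) :=
  \matrix_(r, i) (col_mx (As i *m vert v l + Bs i *m (V l + K *m vert v l))
                         (Cs i *m vert v l + Ds i *m (V l + K *m vert v l))) r 0.

Definition tube_conditions : Prop :=
  tube ord0 Xj
  /\ (forall (l : 'I_Np) x th wx,
        tube (cur l) x -> polyH Hth hth th -> polyH Hwx hwx wx ->
        tube (nxt l) (affmx A0 As th *m x + affmx B0 Bs th *m policy l x + wx))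
  /\ (forall (l : 'I_Np) x, tube (cur l) x ->
        polyH F (ones cx) x /\ polyH Gp (ones (p * cu)) (policy l x))
  /\ (forall (l : 'I_Np) x th wy,
        tube (cur l) x -> polyH Hth hth th -> polyH Hwy hwy wy ->
        polyH Fp (ones (p.-1 * cx))
          (affmx C0 Cs th *m x + affmx D0 Ds th *m policy l x + wy)).

Definition tube_certificate
    (Lam : 'I_nv -> 'I_Np -> 'M[R]_(qx + p.-1 * cx, qth)) :=
  (forall v l i k, 0 <= Lam v l i k)
  /\ forall v l,
       mle (F *m z (cur l) + alpha (cur l) *: fbar) (ones cx)
       /\ mle (Gp *m K *m z (cur l) + Gp *m V l + alpha (cur l) *: gbar)
               (ones (p * cu))
       /\ mle (Hx *m (Xj - z ord0)) (alpha ord0 *: ones qx)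
       /\ mle (Lam v l *m hth + Hp *m succ_nominal v l) (succ_bound l)
       /\ Hp *m succ_param v l = Lam v l *m Hth.

Lemma succ_vertE v l th :
  succ_nominal v l + succ_param v l *m th = succ l th (vert v l).
Proof. by rewrite affmx_col_mx_split /succ /policy [K *m _ + _]addrC. Qed.

Lemma tube_vert v l : tube (cur l) (vert v l).
Proof. exact/polyH_scaled_mem/(xv_extreme v).1. Qed.

Lemma tube_decomp l x : tube l x -> exists2 y, X0 y & x = z l + alpha l *: y.
Proof. exact/(polyH_scaled_decomp X0_bounded (polyH_ones0 Hx) (alpha_ge0 l)). Qed.

Lemma tube_constraints_iff l :
  (forall x, tube (cur l) x ->
     polyH F (ones cx) x /\ polyH Gp (ones (p * cu)) (policy l x)) <->
  mle (F *m z (cur l) + alpha (cur l) *: fbar) (ones cx)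
  /\ mle (Gp *m K *m z (cur l) + Gp *m V l + alpha (cur l) *: gbar)
         (ones (p * cu)).
Proof.
have FE y : F *m (z (cur l) + alpha (cur l) *: y)
    = F *m z (cur l) + alpha (cur l) *: (F *m y) by rewrite mulmxDr scalemxAr.
have GE y : Gp *m policy l (z (cur l) + alpha (cur l) *: y)
    = Gp *m K *m z (cur l) + Gp *m V l + alpha (cur l) *: (Gp *m K *m y).
  by rewrite /policy mulmxDr !mulmxA mulmxDr -scalemxAr addrAC.
rewrite -(mle_max_rows_iff _ _ (alpha_ge0 _) fbar_max).
rewrite -(mle_max_rows_iff _ _ (alpha_ge0 _) gbar_max).
split=> [in_tube|[okF okG] x /tube_decomp[y X0y ->]].
  split=> y X0y;
    have [] := in_tube _ (polyH_scaled_mem _ (alpha_ge0 (cur l)) X0y);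
    by rewrite /polyH ?FE ?GE.
by rewrite /polyH FE GE; split; [apply: okF | apply: okG].
Qed.

Lemma robust_step_iff l th x :
  (forall wx, polyH Hwx hwx wx ->
     tube (nxt l) (affmx A0 As th *m x + affmx B0 Bs th *m policy l x + wx))
  /\ (forall wy, polyH Hwy hwy wy ->
     polyH Fp (ones (p.-1 * cx))
       (affmx C0 Cs th *m x + affmx D0 Ds th *m policy l x + wy))
  <-> mle (Hp *m succ l th x) (succ_bound l).
Proof.
rewrite /succ_bound /succ mul_block_col !mul0mx addr0 add0r opp_col_mx add_col_mx.
set ax := affmx A0 As th *m x + _; set cx' := affmx C0 Cs th *m x + _.
have tubeE w : tube (nxt l) (ax + w)
    = mle (Hx *m (ax - z (nxt l)) + 1 *: (Hx *m w)) (alpha (nxt l) *: ones qx).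
  by rewrite /tube scale1r -mulmxDr addrAC.
have polyE w :
    polyH Fp (ones _) (cx' + w) = mle (Fp *m cx' + 1 *: (Fp *m w)) (ones _).
  by rewrite /polyH scale1r mulmxDr.
rewrite mle_col_mx -!mle_addr_subr -[wbx]scale1r -[wby]scale1r.
rewrite -(mle_max_rows_iff _ _ ler01 wbx_max).
rewrite -(mle_max_rows_iff _ _ ler01 wby_max).
split=> [] [ok_x ok_y]; split=> w Pw;
  by [rewrite -tubeE; apply: ok_x | rewrite -polyE; apply: ok_y
     | rewrite tubeE; apply: ok_x | rewrite polyE; apply: ok_y].
Qed.

Lemma succ_translate l th x y :
  succ l th (x + y) = succ l th x
    + col_mx (affmx A0 As th + affmx B0 Bs th *m K)
             (affmx C0 Cs th + affmx D0 Ds th *m K) *m y.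
Proof.
rewrite /succ /policy mul_col_mx add_col_mx !mulmxDr !mulmxDl !mulmxA.
by congr col_mx; apply/colP => r; rewrite !addmxE ?oppmxE; ring.
Qed.

Lemma tube_succ_le_of_vertices l th :
  (forall v, mle (Hp *m succ l th (vert v l)) (succ_bound l)) ->
  forall x, tube (cur l) x -> mle (Hp *m succ l th x) (succ_bound l).
Proof.
move=> le_vert x /tube_decomp[y X0y ->] r j; rewrite (ord1 j).
pose Acl := col_mx (affmx A0 As th + affmx B0 Bs th *m K)
                  (affmx C0 Cs th + affmx D0 Ds th *m K).
have succE w : (Hp *m succ l th (z (cur l) + alpha (cur l) *: w)) r 0
    = (Hp *m succ l th (z (cur l))) r 0
      + (alpha (cur l) *: (Hp *m Acl) *m w) r 0.
  by rewrite succ_translate mulmxDr addmxE mulmxA -scalemxAr scalemxAl.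
rewrite succE -lerBrDl -rowfE.
apply: (polyH_le_vertices X0_bounded extreme_xv) X0y => v.
rewrite -/(rowf _ r (xv v)) rowfE.
by have := le_vert v r 0; rewrite /vert succE; lra.
Qed.

Lemma tube_conditions_certificate :
  tube_conditions -> exists Lam, tube_certificate Lam.
Proof.
move=> [tube0 [step_x [constr step_y]]].
have cert v l : exists L : 'M[R]_(qx + p.-1 * cx, qth),
  [/\ forall i k, 0 <= L i k,
    Hp *m succ_param v l = L *m Hth
  & mle (L *m hth + Hp *m succ_nominal v l) (succ_bound l)].
  apply/polyH_mle_iff_dual => // th Hth_th.
  rewrite -mulmxA -mulmxDr succ_vertE; apply/robust_step_iff.
  by split=> w Pw; [apply: step_x | apply: step_y] => //; apply: tube_vert.
have [Lam LamP] := fin_all_exists (fun v => fin_all_exists (cert v)).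
exists Lam; split=> [v l|v l]; first by have [] := LamP v l.
have [_ LamE Lam_le] := LamP v l.
by have [constrF constrG] := (tube_constraints_iff l).1 (constr l).
Qed.

Lemma certificate_tube_conditions Lam :
  tube_certificate Lam -> tube_conditions.
Proof.
move=> [Lam_ge0 certP].
have v0 : 'I_nv :=
  Ordinal (polyH_vertex_exists X0_bounded extreme_xv (polyH_ones0 Hx)).
have succ_le l th : polyH Hth hth th ->
    forall x, tube (cur l) x -> mle (Hp *m succ l th x) (succ_bound l).
  move=> Hth_th; apply: tube_succ_le_of_vertices => v.
  have [_ [_ [_ [Lam_le LamE]]]] := certP v l.
  rewrite -succ_vertE mulmxDr mulmxA.
  by apply: (polyH_mle_iff_dual _ _ _ Theta_nonempty).2 => //; exists (Lam v l).
split; first by have [_ [_ []]] := certP v0 (Ordinal Np_gt0).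
split=> [l x th wx tx Hth_th|].
  have [ok_x _] := (robust_step_iff l th x).2 (succ_le l th Hth_th x tx).
  exact: ok_x.
split=> [l|l x th wy tx Hth_th].
  by apply/tube_constraints_iff; have [? []] := certP v0 l.
have [_ ok_y] := (robust_step_iff l th x).2 (succ_le l th Hth_th x tx).
exact: ok_y.
Qed.

End TubeCertificate.

Theorem proposition1 (R : realType)
  (nx nu np p cx cu qth qx qwx qwy nv Np : nat)
  (F : 'M[R]_(cx, nx)) (G : 'M[R]_(cu, nu))
  (A0 : 'M[R]_(nx, nx)) (As : 'I_np -> 'M[R]_(nx, nx))
  (B0 : 'M[R]_(nx, p * nu)) (Bs : 'I_np -> 'M[R]_(nx, p * nu))
  (C0 : 'M[R]_(p.-1 * nx, nx)) (Cs : 'I_np -> 'M[R]_(p.-1 * nx, nx))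
  (D0 : 'M[R]_(p.-1 * nx, p * nu)) (Ds : 'I_np -> 'M[R]_(p.-1 * nx, p * nu))
  (Hth : 'M[R]_(qth, np)) (hth : 'cV[R]_qth)
  (Hwx : 'M[R]_(qwx, nx)) (hwx : 'cV[R]_qwx)
  (Hwy : 'M[R]_(qwy, p.-1 * nx)) (hwy : 'cV[R]_qwy)
  (Hx : 'M[R]_(qx, nx)) (xv : 'I_nv -> 'cV[R]_nx)
  (K : 'M[R]_(p * nu, nx))
  (z : 'I_Np.+1 -> 'cV[R]_nx) (alpha : 'I_Np.+1 -> R)
  (V : 'I_Np -> 'cV[R]_(p * nu)) (Xj : 'cV[R]_nx)
  (fbar : 'cV[R]_cx) (gbar : 'cV[R]_(p * cu))
  (wbx : 'cV[R]_qx) (wby : 'cV[R]_(p.-1 * cx)) :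
  (0 < p)%N -> (0 < Np)%N ->
  (* X and U are compact polytopes *)
  bounded_set (polyH F (ones cx)) -> bounded_set (polyH G (ones cu)) ->
  (* Theta is a nonempty bounded polytope *)
  (exists th, polyH Hth hth th) -> bounded_set (polyH Hth hth) ->
  (* W_x, W_y bounded polytopes *)
  bounded_set (polyH Hwx hwx) -> bounded_set (polyH Hwy hwy) ->
  (* X_0 bounded polytope with vertices x^1..x^nv *)
  bounded_set (polyH Hx (ones qx)) ->
  (forall v, extreme_point (polyH Hx (ones qx)) (xv v)) ->
  (forall x, extreme_point (polyH Hx (ones qx)) x -> exists v, xv v = x) ->
  (forall l, 0 <= alpha l) ->
  (* definitions of fbar, gbar, wbar_x, wbar_y as row-wise maxima *)
  (forall i, is_max_on (polyH Hx (ones qx)) (rowf F i) (fbar i 0)) ->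
  (forall i, is_max_on (polyH Hx (ones qx)) (rowf (blkrep p G *m K) i) (gbar i 0)) ->
  (forall i, is_max_on (polyH Hwx hwx) (rowf Hx i) (wbx i 0)) ->
  (forall i, is_max_on (polyH Hwy hwy) (rowf (blkrep p.-1 F) i) (wby i 0)) ->
  let Xt (l : 'I_Np.+1) (x : 'cV[R]_nx) := mle (Hx *m (x - z l)) (alpha l *: ones qx) in
  let U (l : 'I_Np) (x : 'cV[R]_nx) := K *m x + V l in
  let Gp := blkrep p G in
  let Fp := blkrep p.-1 F in
  let Hp := block_mx Hx 0 0 Fp in
  ( Xt ord0 Xj
    /\ (forall (l : 'I_Np) x th wx, Xt (cur l) x -> polyH Hth hth th -> polyH Hwx hwx wx ->
          Xt (nxt l) (affmx A0 As th *m x + affmx B0 Bs th *m U l x + wx))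
    /\ (forall (l : 'I_Np) x, Xt (cur l) x ->
          polyH F (ones cx) x /\ polyH Gp (ones (p * cu)) (U l x))
    /\ (forall (l : 'I_Np) x th wy, Xt (cur l) x -> polyH Hth hth th -> polyH Hwy hwy wy ->
          polyH Fp (ones (p.-1 * cx)) (affmx C0 Cs th *m x + affmx D0 Ds th *m U l x + wy)) )
  <->
  (exists Lam : 'I_nv -> 'I_Np -> 'M[R]_(qx + p.-1 * cx, qth),
     (forall v l i k, 0 <= Lam v l i k) /\
     forall (v : 'I_nv) (l : 'I_Np),
       let Xv := z (cur l) + alpha (cur l) *: xv v in
       let Uv := V l + K *m Xv in
       let Ev : 'M[R]_(nx + p.-1 * nx, np) :=
         \matrix_(r, i) (col_mx (As i *m Xv + Bs i *m Uv) (Cs i *m Xv + Ds i *m Uv)) r 0 in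
       let ev := col_mx (A0 *m Xv + B0 *m Uv - z (nxt l)) (C0 *m Xv + D0 *m Uv) in
       let Phi := col_mx (alpha (nxt l) *: ones qx) (ones (p.-1 * cx)) in
       mle (F *m z (cur l) + alpha (cur l) *: fbar) (ones cx)
       /\ mle (Gp *m K *m z (cur l) + Gp *m V l + alpha (cur l) *: gbar)
               (ones (p * cu))
       /\ mle (Hx *m (Xj - z ord0)) (alpha ord0 *: ones qx)
       /\ mle (Lam v l *m hth + Hp *m ev) (Phi - col_mx wbx wby)
       /\ Hp *m Ev = Lam v l *m Hth).
Proof.
move=> _ Np_gt0 _ _ Theta_nonempty _ _ _ X0_bounded xv_extreme extreme_xv alpha_ge0.
move=> fbar_max gbar_max wbx_max wby_max.
split=> [conds|[Lam cert]].
  by move: conds; apply: tube_conditions_certificate.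
by move: cert; apply: certificate_tube_conditions.
Qed.
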